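(* In every state $\mathbf{x}$ of the common-chunk-protocol Markov process (with $k\ge 2$ chunks and any $\lambda>0$), for every chunk $i\in\{1,\dots,k\}$, \[ r \;\ge\; \frac{2\,\bar S_i^{\,3}\, S_i}{3\,S^3}. \]
   Context: Model: Fix an integer $k\ge 2$ (number of chunks of a file) and $\lambda>0$. There is always exactly one seed holding all $k$ chunks. Non-seed peers arrive according to a Poisson process of rate $\lambda$, each arriving with no chunks; each non-seed peer holds a subset (its profile) of $\{1,\dots,k\}$ and leaves the system immediately once it holds all $k$ chunks. The state $\mathbf{x}$ of the continuous-time Markov process is the number of non-seed peers with each profile. $S$ denotes the total number of peers present, including the seed. Each non-seed peer has an independent rate-1 Poisson clock; at each tick it draws a sample of peers independently and uniformly at random with replacement from the current $S$ peers (seed and itself included) and may instantaneously download at most one chunk that it lacks and that is held by some sampled peer (such a chunk is a ''match''). Counting draws with multiplicity, a chunk is ''rare'' in a sample of 3 draws if exactly one of the 3 draws holds it. Common chunk protocol: (i) a peer with no chunks draws 3 peers and downloads a chunk chosen uniformly among the rare matches, if there is any, otherwise nothing; (ii) a peer holding at least 1 and at most $k-2$ chunks draws 1 peer and downloads a uniformly chosen match, if any, otherwise nothing; (iii) a peer holding exactly $k-1$ chunks draws 3 peers and downloads its missing chunk only if that chunk is held by some draw and every chunk it holds is held by at least 2 of the 3 draws; otherwise nothing. Notation: $S_i$ ($1\le i\le k$) is the number of peers, including the seed, holding chunk $i$; $\bar S_i=S-S_i$. $r=r(\mathbf{x})$ is the total rate of download events in state $\mathbf{x}$, i.e. the sum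 over all non-seed peers of the probability that a clock tick of that peer results in a download. *)

From HB Require Import structures.
From mathcomp Require Import all_boot all_order all_algebra.
Set Implicit Arguments. Unset Strict Implicit. Unset Printing Implicit Defensive.
Import Order.TTheory GRing.Theory Num.Theory.

(* Chunks are 'I_k; a profile is a set {set 'I_k}.
   A state x : {set 'I_k} -> nat gives the number of NON-SEED peers with each
   profile (x setT = 0 is assumed, since complete peers leave).
   The seed is added separately, with profile setT. *)

Definition wgt (k : nat) (x : {set 'I_k} -> nat) (A : {set 'I_k}) : nat :=
  x A + (A == setT).

Definition Stot (k : nat) (x : {set 'I_k} -> nat) : nat :=
  \sum_(A : {set 'I_k}) wgt x A.

Definition Schunk (k : nat) (x : {set 'I_k} -> nat) (i : 'I_k) : nat :=
  \sum_(A : {set 'I_k} | i \in A) wgt x A.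

Definition Sbar (k : nat) (x : {set 'I_k} -> nat) (i : 'I_k) : nat :=
  Stot x - Schunk x i.

Definition nheld (k : nat) (B C D : {set 'I_k}) (j : 'I_k) : nat :=
  (j \in B) + (j \in C) + (j \in D).

Definition dl_empty (k : nat) (B C D : {set 'I_k}) : bool :=
  [exists j, nheld B C D j == 1%N].

Definition dl_last (k : nat) (A B C D : {set 'I_k}) : bool :=
  [exists j, (j \notin A) && (j \in B :|: C :|: D)] &&
  [forall j in A, 2 <= nheld B C D j].

(* probability that a clock tick of a peer with profile A yields a download *)
Definition dl_prob (R : realFieldType) (k : nat) (x : {set 'I_k} -> nat)
    (A : {set 'I_k}) : R :=
  (if A == set0 then
    (\sum_(B : {set 'I_k}) \sum_(C : {set 'I_k}) \sum_(D : {set 'I_k})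
       wgt x B * wgt x C * wgt x D * dl_empty B C D)%N%:R / ((Stot x) ^ 3)%N%:R
  else if (#|A| <= k - 2)%N then
    (\sum_(B : {set 'I_k} | ~~ (B \subset A)) wgt x B)%N%:R / (Stot x)%:R
  else if (#|A| == k - 1)%N then
    (\sum_(B : {set 'I_k}) \sum_(C : {set 'I_k}) \sum_(D : {set 'I_k})
       wgt x B * wgt x C * wgt x D * dl_last A B C D)%N%:R / ((Stot x) ^ 3)%N%:R
  else 0)%R.

Definition rate (R : realFieldType) (k : nat) (x : {set 'I_k} -> nat) : R :=
  (\sum_(A : {set 'I_k}) ((x A)%:R * dl_prob R x A)%R)%R.

From HB Require Import structures.
From mathcomp Require Import all_boot all_order all_algebra.
From mathcomp Require Import zify ring lra.
Import Order.TTheory GRing.Theory Num.Theory.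

(* Fix a chunk i and write a = S_i, b = \bar S_i, S = a + b, and
   m = x([set~ i]) for the number of peers missing exactly chunk i.
   Only peers lacking i are counted, and each one downloads with a
   probability bounded below by a sampling argument:
   - an empty peer downloads whenever exactly one of its 3 draws holds i,
     an event of weight 3 a b^2 among the S^3 samples;
   - a peer with 1 <= |A| <= k-2 downloads whenever its draw holds i,
     probability at least a / S >= a b^2 / S^3;
   - a peer with profile [set~ i] downloads whenever two draws share its
     profile and the third holds i, weight 3 m^2 a.
   Summing gives  r S^3 >= 3 m^3 a + (b - m) a b^2,  and the elementary
   cubic inequality 2 (m + d)^3 <= 3 (3 m^3 + d (m + d)^2) for m, d >= 0
   (take d = b - m) yields  r >= 2 b^3 a / (3 S^3). *)

Set Implicit Arguments. Unset Strict Implicit.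

Lemma sum3_mul (T : finType) (f g h : T -> nat) :
  (\sum_B \sum_C \sum_D (f B * g C * h D) =
   (\sum_B f B) * (\sum_C g C) * (\sum_D h D))%N.
Proof.
rewrite -mulnA big_distrl /=; apply: eq_bigr => B _.
rewrite mulnA [(f B * _)%N]big_distrr /= big_distrl /=; apply: eq_bigr => C _.
by rewrite big_distrr.
Qed.

Lemma sum3D (T : finType) (F G : T -> T -> T -> nat) :
  (\sum_B \sum_C \sum_D (F B C D + G B C D) =
   \sum_B \sum_C \sum_D F B C D + \sum_B \sum_C \sum_D G B C D)%N.
Proof.
rewrite -big_split; apply: eq_bigr => B _; rewrite -big_split.
by apply: eq_bigr => C _; rewrite -big_split.
Qed.

Lemma leq_sum3 (T : finType) (F G : T -> T -> T -> nat) :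
  (forall B C D, F B C D <= G B C D)%N ->
  (\sum_B \sum_C \sum_D F B C D <= \sum_B \sum_C \sum_D G B C D)%N.
Proof.
move=> FG; do 3!apply: leq_sum => ? _; exact: FG.
Qed.

Section SampleCounting.
Variables (k : nat) (x : {set 'I_k} -> nat) (i : 'I_k).

Definition held_wgt (B : {set 'I_k}) : nat := wgt x B * (i \in B).
Definition lack_wgt (B : {set 'I_k}) : nat := wgt x B * (i \notin B).

Lemma sum_held_wgt : (\sum_B held_wgt B = Schunk x i)%N.
Proof.
rewrite /Schunk [RHS]big_mkcond; apply: eq_bigr => B _.
by rewrite /held_wgt; case: (i \in B); rewrite ?muln1 ?muln0.
Qed.

Lemma Stot_split :
  Stot x = (Schunk x i + \sum_(A : {set 'I_k} | i \notin A) wgt x A)%N.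
Proof. by rewrite /Stot (bigID (fun A : {set 'I_k} => i \in A)). Qed.

Lemma sum_lack_wgt : (\sum_B lack_wgt B = Sbar x i)%N.
Proof.
rewrite /Sbar Stot_split addKn [RHS]big_mkcond; apply: eq_bigr => B _.
by rewrite /lack_wgt; case: (i \in B); rewrite ?muln1 ?muln0.
Qed.

Lemma wgt_lacking (A : {set 'I_k}) : i \notin A -> wgt x A = x A.
Proof.
move=> iA; rewrite /wgt; case: eqP => [eA|_]; last by rewrite addn0.
by move: iA; rewrite eA in_setT.
Qed.

Lemma Sbar_lacking : Sbar x i = (\sum_(A : {set 'I_k} | i \notin A) x A)%N.
Proof.
rewrite /Sbar Stot_split addKn; apply: eq_bigr => A iA; exact: wgt_lacking.
Qed.

Lemma Schunk_ge1 : (1 <= Schunk x i)%N.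
Proof. by rewrite /Schunk (bigD1 setT) ?in_setT //= /wgt eqxx addn1. Qed.

(* Rule (i): chunk i is rare whenever exactly one draw holds it. *)
Lemma empty_sample_bound (B C D : {set 'I_k}) :
  (held_wgt B * lack_wgt C * lack_wgt D + lack_wgt B * held_wgt C * lack_wgt D
   + lack_wgt B * lack_wgt C * held_wgt D <=
   wgt x B * wgt x C * wgt x D * dl_empty B C D)%N.
Proof.
have rare (b c d : bool) : (b + c + d = 1)%N ->
    i \in B = b -> i \in C = c -> i \in D = d -> dl_empty B C D.
  by move=> one iB iC iD; apply/existsP; exists i; rewrite /nheld iB iC iD one.
rewrite /held_wgt /lack_wgt.
case iB: (i \in B); case iC: (i \in C); case iD: (i \in D);
  rewrite /= ?muln0 ?mul0n ?muln1 ?addn0 ?add0n //;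
  by rewrite (rare _ _ _ _ iB iC iD) ?muln1.
Qed.

Lemma empty_count_bound :
  (3 * Schunk x i * Sbar x i ^ 2 <= \sum_B \sum_C \sum_D
       (wgt x B * wgt x C * wgt x D * dl_empty B C D))%N.
Proof.
apply: leq_trans (leq_sum3 empty_sample_bound).
rewrite !sum3D !sum3_mul sum_held_wgt sum_lack_wgt; lia.
Qed.

(* Rule (ii): every draw holding i is a match for a peer lacking i. *)
Lemma mid_count_bound (A : {set 'I_k}) : i \notin A ->
  (Schunk x i <= \sum_(B : {set 'I_k} | ~~ (B \subset A)) wgt x B)%N.
Proof.
move=> iA; rewrite /Schunk [X in (_ <= X)%N]big_mkcond [X in (X <= _)%N]big_mkcond.
apply: leq_sum => B _; case iB: (i \in B) => //=.
suff -> : ~~ (B \subset A) by [].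
by apply: contra iA => /subsetP; apply.
Qed.

Definition same_wgt (A B : {set 'I_k}) : nat := wgt x B * (B == A).

Lemma sum_same_wgt (A : {set 'I_k}) : i \notin A -> (\sum_B same_wgt A B = x A)%N.
Proof.
move=> iA; rewrite (bigD1 A) //= big1 ?addn0; first by rewrite /same_wgt eqxx muln1 wgt_lacking.
by move=> B /negbTE nBA; rewrite /same_wgt nBA muln0.
Qed.

(* Rule (iii) succeeds when two draws have the peer's own profile A and the
   third holds the missing chunk i. *)
Lemma dl_last_witness (A B C D : {set 'I_k}) :
  i \notin A -> i \in B :|: C :|: D ->
  (forall l, l \in A -> 2 <= nheld B C D l)%N -> dl_last A B C D.
Proof.
move=> iA iBCD twice; apply/andP; split; first by apply/existsP; exists i; rewrite iA iBCD.
by apply/forallP => l; apply/implyP => /twice.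
Qed.

Lemma last_sample_bound (A B C D : {set 'I_k}) : i \notin A ->
  (same_wgt A B * same_wgt A C * held_wgt D + same_wgt A B * held_wgt C * same_wgt A D
   + held_wgt B * same_wgt A C * same_wgt A D <=
   wgt x B * wgt x C * wgt x D * dl_last A B C D)%N.
Proof.
move=> iA; have iAF := negbTE iA.
rewrite /same_wgt /held_wgt.
case: (eqVneq B A) => [->|nB]; case: (eqVneq C A) => [->|nC];
  case: (eqVneq D A) => [->|nD];
  rewrite ?eqxx ?(negbTE nB) ?(negbTE nC) ?(negbTE nD) ?iAF /= ?muln0 ?mul0n ?addn0 ?add0n //.
- case iD: (i \in D); rewrite ?muln0 // muln1 dl_last_witness ?muln1 //.
    by rewrite !in_setU iD orbT.
  by move=> l lA; rewrite /nheld lA.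
- case iC: (i \in C); rewrite ?muln0 // muln1 dl_last_witness ?muln1 //.
    by rewrite !in_setU iC orbT.
  by move=> l lA; rewrite /nheld lA /=; lia.
- case iB: (i \in B); rewrite ?muln0 // muln1 dl_last_witness ?muln1 //.
    by rewrite !in_setU iB.
  by move=> l lA; rewrite /nheld lA /=; lia.
Qed.

Lemma last_count_bound (A : {set 'I_k}) : i \notin A ->
  (3 * x A ^ 2 * Schunk x i <= \sum_B \sum_C \sum_D
       (wgt x B * wgt x C * wgt x D * dl_last A B C D))%N.
Proof.
move=> iA; apply: leq_trans (leq_sum3 (fun B C D => last_sample_bound B C D iA)).
rewrite !sum3D !sum3_mul sum_held_wgt sum_same_wgt //; lia.
Qed.

End SampleCounting.

Section DownloadProbability.
Local Open Scope ring_scope.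
Variables (R : realFieldType) (k : nat) (x : {set 'I_k} -> nat) (i : 'I_k).

Let a : R := (Schunk x i)%:R.
Let b : R := (Sbar x i)%:R.
Let S : R := (Stot x)%:R.
Let m : R := (x [set~ i])%:R.

Lemma S_split : S = a + b.
Proof. by rewrite /S /a /b /Sbar (Stot_split x i) addKn natrD. Qed.

Lemma S_gt0 : 0 < S.
Proof. by rewrite /S ltr0n (leq_trans (Schunk_ge1 x i)) // (Stot_split x i) leq_addr. Qed.

Lemma dl_prob_ge0 (A : {set 'I_k}) : 0 <= dl_prob R x A.
Proof.
by rewrite /dl_prob; case: ifP => _; [|case: ifP => _; [|case: ifP => _]];
  rewrite ?divr_ge0.
Qed.

Lemma dl_prob_empty : 3 * a * b ^+ 2 <= dl_prob R x set0 * S ^+ 3.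
Proof.
rewrite /dl_prob eqxx natrX -/S divfK ?expf_neq0 ?gt_eqF ?S_gt0 //.
by rewrite /a /b -natrX -(natrM R 3) -natrM ler_nat empty_count_bound.
Qed.

(* A peer lacking i with 1 <= |A| <= k-2 downloads with probability at least
   a / S, hence at least a b^2 / S^3 since b <= S. *)
Lemma dl_prob_mid (A : {set 'I_k}) :
  A != set0 -> (#|A| <= k - 2)%N -> i \notin A ->
  a * b ^+ 2 <= dl_prob R x A * S ^+ 3.
Proof.
move=> A0 Asmall iA; rewrite /dl_prob (negbTE A0) Asmall -/S.
have Spos := S_gt0; have a0 : 0 <= a by []; have b0 : 0 <= b by [].
have aN : a <= (\sum_(B : {set 'I_k} | ~~ (B \subset A)) wgt x B)%:R.
  by rewrite ler_nat mid_count_bound.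
move: aN; set N : R := _%:R => aN.
have -> : N / S * S ^+ 3 = N * S ^+ 2 by field; rewrite gt_eqF.
have b2S2 : b ^+ 2 <= S ^+ 2 by rewrite ler_pXn2r // ?nnegrE S_split; lra.
apply: le_trans (ler_wpM2r (sqr_ge0 _) aN); exact: ler_wpM2l.
Qed.

Lemma dl_prob_last (A : {set 'I_k}) :
  A != set0 -> #|A| = k.-1 -> i \notin A ->
  3 * (x A)%:R ^+ 2 * a <= dl_prob R x A * S ^+ 3.
Proof.
move=> A0 cardA iA.
have k_ge2 : (1 < k)%N by move: A0; rewrite -card_gt0 cardA; lia.
rewrite /dl_prob (negbTE A0).
have -> : (#|A| <= k - 2)%N = false by rewrite cardA; lia.
have -> : (#|A| == k - 1)%N by rewrite cardA; lia.
rewrite natrX -/S divfK ?expf_neq0 ?gt_eqF ?S_gt0 //.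
by rewrite /a -natrX -(natrM R 3) -natrM ler_nat last_count_bound.
Qed.

Lemma dl_prob_lacking (A : {set 'I_k}) : i \notin A -> A != [set~ i] ->
  a * b ^+ 2 <= dl_prob R x A * S ^+ 3.
Proof.
move=> iA notC1.
have [->|A0] := eqVneq A set0.
  by apply: le_trans dl_prob_empty; rewrite -mulrA ler_peMl ?mulr_ge0 ?ler1n.
apply: dl_prob_mid => //; rewrite leqNgt; apply: contra notC1 => Abig.
rewrite eqEcard cardsC1 card_ord; apply/andP; split.
  by apply/subsetP => j jA; rewrite !inE; apply: contra iA => /eqP <-.
by move: Abig; rewrite -subn1; move: #|A| => c; lia.
Qed.

Lemma rate_lower_bound : (2 <= k)%N ->
  m * (3 * m ^+ 2 * a) + (b - m) * (a * b ^+ 2) <= rate R x * S ^+ 3.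
Proof.
move=> k_ge2; set C1 := [set~ i].
have iC1 : i \notin C1 by rewrite !inE eqxx.
have C1_0 : C1 != set0.
  by apply/eqP => e; move: (cardsC1 i); rewrite -/C1 e cards0 card_ord; lia.
pose Q A := (x A)%:R * (dl_prob R x A * S ^+ 3).
have Q0 A : 0 <= Q A.
  by rewrite /Q !mulr_ge0 ?dl_prob_ge0 // ltW // exprn_gt0 // S_gt0.
have rateQ : rate R x * S ^+ 3 = \sum_A Q A.
  by rewrite /rate mulr_suml; apply: eq_bigr => A _; rewrite /Q mulrA.
have lackQ : \sum_(A : {set 'I_k} | i \notin A) Q A <= rate R x * S ^+ 3.
  rewrite rateQ [X in _ <= X](bigID (fun A : {set 'I_k} => i \in A)) /=.
  by rewrite ler_wpDl ?sumr_ge0.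
apply: le_trans lackQ; rewrite (bigD1 C1) //=.
apply: lerD; first by rewrite /Q ler_wpM2l // dl_prob_last // cardsC1 card_ord.
have -> : b - m = \sum_(A : {set 'I_k} | (i \notin A) && (A != C1)) (x A)%:R.
  by rewrite /b Sbar_lacking (bigD1 C1) //= natrD addrC addKr natr_sum.
rewrite mulr_suml; apply: ler_sum => A /andP[iA notC1].
by rewrite ler_wpM2l // dl_prob_lacking.
Qed.

End DownloadProbability.

Local Open Scope ring_scope.

Lemma cubic_bound (R : realFieldType) (m d : R) : 0 <= m -> 0 <= d ->
  2 * (m + d) ^+ 3 <= 3 * (3 * m ^+ 3 + d * (m + d) ^+ 2).
Proof.
move=> m0 d0; rewrite -subr_ge0.
have -> : 3 * (3 * m ^+ 3 + d * (m + d) ^+ 2) - 2 * (m + d) ^+ 3 =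
          (d - m) ^+ 2 * (d + 2 * m) + 5 * m ^+ 3 by ring.
have dm0 : 0 <= d + 2 * m by lra.
by apply: addr_ge0; apply: mulr_ge0; rewrite ?sqr_ge0 ?exprn_ge0.
Qed.

Unset Implicit Arguments.

Theorem mainTheorem3 (R : realFieldType) (k : nat) (hk : (2 <= k)%N)
    (lam : R) (hlam : 0 < lam)
    (x : {set 'I_k} -> nat) (hx : x setT = 0%N) (i : 'I_k) :
  2 * (Sbar x i)%:R ^+ 3 * (Schunk x i)%:R / (3 * (Stot x)%:R ^+ 3)
    <= rate R x.
Proof.
set a : R := (Schunk x i)%:R; set b : R := (Sbar x i)%:R.
set m : R := (x [set~ i])%:R.
have S3_gt0 : 0 < ((Stot x)%:R : R) ^+ 3 by rewrite exprn_gt0 // (S_gt0 R x i).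
rewrite ler_pdivrMr; last by rewrite mulr_gt0.
have m_le_b : m <= b.
  by rewrite /m /b ler_nat Sbar_lacking (bigD1 [set~ i]) ?leq_addr // !inE eqxx.
have bm0 : 0 <= b - m by rewrite subr_ge0.
have := cubic_bound (ler0n R (x [set~ i])) bm0; rewrite -/m subrKC => cubic.
apply: le_trans (ler_wpM2r (ler0n R (Schunk x i)) cubic) _.
have -> : 3 * (3 * m ^+ 3 + (b - m) * b ^+ 2) * a =
          3 * (m * (3 * m ^+ 2 * a) + (b - m) * (a * b ^+ 2)) by ring.
by rewrite [rate R x * _]mulrCA ler_wpM2l // rate_lower_bound.
Qed.
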